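(* Let $E$ be a nonempty closed convex subset of a real Hilbert space $H$. Let $f:E\times E\to\mathbb{R}$ be a bifunction satisfying conditions (A1)–(A4) below, and let $S:E\to E$ be a hybrid mapping with $F(S)\cap EP(f)\neq\emptyset$. Let $\{\alpha_n\}$ satisfy $0<\alpha\le\alpha_n\le 1$ for all $n$ (for some constant $\alpha>0$), let $\{r_n\}\subset(0,\infty)$ satisfy $\liminf_{n\to\infty}r_n>0$, and let $\{\beta_n\}$ be a sequence in $[b,1]$ for some $b\in(0,1)$ with $\liminf_{n\to\infty}\beta_n(1-\beta_n)>0$. Let $\{x_n\}$ and $\{u_n\}$ be generated by $x_1=x\in E$ and, for all $n\in\mathbb{N}$, $$u_n\in E \text{ such that } f(u_n,y)+\frac{1}{r_n}\langle y-u_n,u_n-x_n\rangle\ge 0\quad\text{for all } y\in E,$$ $$y_n=(1-\beta_n)x_n+\beta_n Su_n,\qquad x_{n+1}=(1-\alpha_n)x_n+\alpha_n Sy_n.$$ Then $\{x_n\}$ converges weakly to a point $v\in F(S)\cap EP(f)$, where $v=\lim_{n\to\infty}P_{F(S)\cap EP(f)}(x_n)$.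
   Context: $F(S)=\{x\in E: Sx=x\}$. A mapping $S:E\to E$ is hybrid if $3\|Sx-Sy\|^2\le \|x-y\|^2+\|Sx-y\|^2+\|Sy-x\|^2$ for all $x,y\in E$. $EP(f)=\{x\in E: f(x,y)\ge 0 \text{ for all } y\in E\}$. Conditions: (A1) $f(x,x)=0$ for all $x\in E$; (A2) $f(x,y)+f(y,x)\le 0$ for all $x,y\in E$; (A3) for all $x,y,z\in E$, $\lim_{t\downarrow 0} f(tz+(1-t)x,y)\le f(x,y)$; (A4) for each $x\in E$, $y\mapsto f(x,y)$ is convex and lower semicontinuous. $P_K$ is the metric projection of $H$ onto a nonempty closed convex set $K$; the limit defining $v$ is in norm. *)

From HB Require Import structures.
From mathcomp Require Import all_boot all_order all_algebra.
From mathcomp Require Import all_classical all_reals all_analysis.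
Set Implicit Arguments. Unset Strict Implicit. Unset Printing Implicit Defensive.
Import Order.TTheory GRing.Theory Num.Theory.
Import numFieldNormedType.Exports.
Local Open Scope classical_set_scope.
Local Open Scope ring_scope.

Section Defs.
Variables (R : realType) (V : normedModType R).

Definition is_inner_product (ip : V -> V -> R) : Prop :=
  [/\ (forall x y, ip x y = ip y x),
      (forall (a : R) x y z, ip (a *: x + y) z = a * ip x z + ip y z)
    & (forall x, ip x x = `|x| ^+ 2)].

Definition convex_subset (E : set V) : Prop :=
  forall x y (t : R), E x -> E y -> 0 <= t <= 1 -> E (t *: x + (1 - t) *: y).

Definition Fixpts (E : set V) (S : V -> V) : set V := [set x | E x /\ S x = x].

Definition EPset (E : set V) (f : V -> V -> R) : set V :=
  [set x | E x /\ forall y, E y -> 0 <= f x y].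

Definition hybrid (E : set V) (S : V -> V) : Prop :=
  forall x y, E x -> E y ->
    3 * `|S x - S y| ^+ 2 <= `|x - y| ^+ 2 + `|S x - y| ^+ 2 + `|S y - x| ^+ 2.

Definition A1 (E : set V) (f : V -> V -> R) := forall x, E x -> f x x = 0.
Definition A2 (E : set V) (f : V -> V -> R) :=
  forall x y, E x -> E y -> f x y + f y x <= 0.
(* lim_{t -> 0+} f(tz + (1-t)x, y) <= f(x,y), read as limsup *)
Definition A3 (E : set V) (f : V -> V -> R) :=
  forall x y z, E x -> E y -> E z ->
    forall eps : R, 0 < eps ->
      \forall t \near 0^'+, f (t *: z + (1 - t) *: x) y <= f x y + eps.
Definition A4 (E : set V) (f : V -> V -> R) :=
  forall x, E x ->
    (forall y1 y2 (t : R), E y1 -> E y2 -> 0 <= t <= 1 ->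
       f x (t *: y1 + (1 - t) *: y2) <= t * f x y1 + (1 - t) * f x y2) /\
    (forall y, E y -> forall eps : R, 0 < eps ->
       \forall z \near y, E z -> f x y - eps < f x z).

(* metric projection onto K: a nearest point of K (unique when K is a
   nonempty closed convex subset of a Hilbert space) *)
Definition metric_proj (K : set V) (z : V) : V :=
  xget 0 [set p | K p /\ forall k, K k -> `|z - p| <= `|z - k|].

Definition weak_cvg (ip : V -> V -> R) (x : nat -> V) (v : V) : Prop :=
  forall w, (fun n => ip (x n) w) @ \oo --> ip v w.

End Defs.

From HB Require Import structures.
From mathcomp Require Import all_boot all_order all_algebra.
From mathcomp Require Import all_classical all_reals all_analysis.
From mathcomp Require Import ring lra.
Import Order.TTheory GRing.Theory Num.Theory.
Import numFieldNormedType.Exports.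
Local Open Scope classical_set_scope.
Local Open Scope ring_scope.
Set Implicit Arguments. Unset Strict Implicit.

(* For p in C := F(S) ∩ EP(f) the iteration is Fejér monotone:
     |x_{n+1} - p|^2 <= |x_n - p|^2 - α_n β_n (|x_n - u_n|^2 + (1 - β_n) |x_n - S u_n|^2),
   so x_n - u_n -> 0 and u_n - S u_n -> 0, and the projections P_C x_n form a Cauchy
   sequence with a limit w in C.  Weak convergence x_n ⇀ w is proved without a weak
   topology.  If <x_n - w, h> >= c > 0 infinitely often, the closed convex hulls of the
   tails of the corresponding u_n are nested, nonempty and bounded, hence (their
   minimal-norm points being Cauchy) have a common point z, which lies in every closed
   convex set eventually containing those u_n.  Half-spaces and sublevel sets of f(y, .)
   show that S z = z (hybridness), z ∈ EP(f) (Minty's lemma), z = w (variational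
   inequality of P_C), and finally <z - w, h> <= -c/2, a contradiction. *)

Section InnerProduct.
Variables (R : realType) (V : normedModType R) (ip : V -> V -> R).
Hypothesis ipP : is_inner_product ip.

Lemma ipC x y : ip x y = ip y x. Proof. by case: ipP. Qed.
Lemma ipxx x : ip x x = `|x| ^+ 2. Proof. by case: ipP. Qed.
Lemma ipZDl (c : R) x y z : ip (c *: x + y) z = c * ip x z + ip y z.
Proof. by case: ipP. Qed.

Lemma ip0l z : ip 0 z = 0.
Proof. by have := ipZDl (-1) 0 0 z; rewrite scaler0 addr0 mulN1r addNr. Qed.
Lemma ipZl (c : R) x z : ip (c *: x) z = c * ip x z.
Proof. by rewrite -[c *: x]addr0 ipZDl ip0l addr0. Qed.
Lemma ipDl x y z : ip (x + y) z = ip x z + ip y z.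
Proof. by rewrite -[x in LHS]scale1r ipZDl mul1r. Qed.
Lemma ipNl x z : ip (- x) z = - ip x z.
Proof. by rewrite -scaleN1r ipZl mulN1r. Qed.
Lemma ipBl x y z : ip (x - y) z = ip x z - ip y z.
Proof. by rewrite ipDl ipNl. Qed.
Lemma ip0r z : ip z 0 = 0.
Proof. by rewrite ipC ip0l. Qed.
Lemma ipZr (c : R) x z : ip z (c *: x) = c * ip z x.
Proof. by rewrite ipC ipZl ipC. Qed.
Lemma ipDr x y z : ip z (x + y) = ip z x + ip z y.
Proof. by rewrite ipC ipDl ![ip _ z]ipC. Qed.
Lemma ipNr x z : ip z (- x) = - ip z x.
Proof. by rewrite ipC ipNl ipC. Qed.
Lemma ipBr x y z : ip z (x - y) = ip z x - ip z y.
Proof. by rewrite ipDr ipNr. Qed.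

Lemma sqr_normB x y : `|x - y| ^+ 2 = `|x| ^+ 2 - 2 * ip x y + `|y| ^+ 2.
Proof. by rewrite -!ipxx ipBl !ipBr (ipC y x); ring. Qed.

Lemma cauchy_schwarz x y : ip x y <= `|x| * `|y|.
Proof.
have [->|x0] := eqVneq x 0; first by rewrite ip0l normr0 mul0r.
have [->|y0] := eqVneq y 0; first by rewrite ip0r normr0 mulr0.
have xy_gt0 : 0 < `|x| * `|y| by rewrite mulr_gt0 ?normr_gt0.
have := sqr_ge0 `|(`|y| *: x - `|x| *: y)|.
rewrite sqr_normB ipZl ipZr !normrZ !normr_id => h.
rewrite -(ler_pM2l xy_gt0); nra.
Qed.

Lemma normr_ip_le x y : `|ip x y| <= `|x| * `|y|.
Proof.
rewrite ler_norml cauchy_schwarz andbT.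
by have := cauchy_schwarz (- x) y; rewrite ipNl normrN lerNl.
Qed.

End InnerProduct.

Ltac ip_expand ipP := rewrite -?(ipxx ipP) ?(ipBl ipP) ?(ipBr ipP) ?(ipDl ipP)
  ?(ipDr ipP) ?(ipZl ipP) ?(ipZr ipP) ?(ipNl ipP) ?(ipNr ipP).

Section Identities.
Variables (R : realType) (V : normedModType R) (ip : V -> V -> R).
Hypothesis ipP : is_inner_product ip.

Lemma sqr_norm_convex (t : R) (x y p : V) :
  `|(1 - t) *: x + t *: y - p| ^+ 2 =
  (1 - t) * `|x - p| ^+ 2 + t * `|y - p| ^+ 2 - t * (1 - t) * `|x - y| ^+ 2.
Proof. ip_expand ipP; rewrite (ipC ipP y x) (ipC ipP p x) (ipC ipP p y); ring. Qed.

Lemma law_of_cosines (x y z : V) :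
  `|x - z| ^+ 2 = `|x - y| ^+ 2 + `|y - z| ^+ 2 - 2 * ip (x - y) (z - y).
Proof. ip_expand ipP; rewrite (ipC ipP y x) (ipC ipP z x) (ipC ipP z y); ring. Qed.

Lemma parallelogram_midpoint (z k1 k2 : V) :
  `|k1 - k2| ^+ 2 = 2 * `|z - k1| ^+ 2 + 2 * `|z - k2| ^+ 2
     - 4 * `|z - ((1 / 2) *: k1 + (1 - 1 / 2) *: k2)| ^+ 2.
Proof.
ip_expand ipP; rewrite (ipC ipP k2 k1) (ipC ipP k1 z) (ipC ipP k2 z).
by field.
Qed.

(* The hypothesis is [hybrid] at [u] and [z], with [s = S u] and [v = S z]. *)
Lemma hybrid_ip_bound (u z s v : V) :
  3 * `|s - v| ^+ 2 <= `|u - z| ^+ 2 + `|s - z| ^+ 2 + `|v - u| ^+ 2 ->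
  2 * ip (u - z) (z - v) + `|z - v| ^+ 2 <= `|s - u| * (`|u - z| + 3 * `|u - v|).
Proof.
move=> hyb.
have : 2 * ip (u - z) (z - v) + `|z - v| ^+ 2 <=
       ip (s - u) (u - z) - 3 * ip (s - u) (u - v) - `|s - u| ^+ 2.
  move: hyb; ip_expand ipP.
  rewrite (ipC ipP z u) (ipC ipP s u) (ipC ipP v u) (ipC ipP s z) (ipC ipP v z).
  rewrite (ipC ipP v s); lra.
have := cauchy_schwarz ipP (s - u) (u - z).
have := normr_ip_le ipP (s - u) (u - v); rewrite ler_norml => /andP[+ _].
have := sqr_ge0 `|s - u|; nra.
Qed.

Lemma halfspace_convex (z d : V) (c : R) : convex_subset [set y | ip (y - z) d <= c].
Proof.
move=> x y t /= hx hy /andP[t0 t1].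
have -> : ip (t *: x + (1 - t) *: y - z) d = t * ip (x - z) d + (1 - t) * ip (y - z) d.
  by ip_expand ipP; ring.
nra.
Qed.

End Identities.

Section Closedness.
Variables (R : realType) (V : normedModType R).

Lemma closed_le_lipschitz (g : V -> R) (L c : R) : 0 <= L ->
  (forall x y, g x <= g y + L * `|x - y|) -> closed [set y | g y <= c].
Proof.
move=> L0 g_lip y cly /=; rewrite leNgt; apply/negP => gy_gt.
set e := (g y - c) / (L + 1).
have e0 : 0 < e by rewrite divr_gt0 ?subr_gt0 //; lra.
have Le : (L + 1) * e = g y - c by rewrite mulrC divfK //; lra.
have [w [/= gw]] := cly _ (nbhsx_ballx y _ e0); rewrite -ball_normE /= => yw.
have := ler_wpM2l L0 (ltW yw); have := g_lip y w; nra.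
Qed.

Lemma closed_sublevel_lsc (E : set V) (g : V -> R) (c : R) : closed E ->
  (forall y, E y -> forall eps, 0 < eps -> \forall z \near y, E z -> g y - eps < g z) ->
  closed [set y | E y /\ g y <= c].
Proof.
move=> E_closed g_lsc y cly.
have Ey : E y by apply: (E_closed); apply: (closureS _ cly) => w [].
split => //; rewrite leNgt; apply/negP => gy_gt.
have [w [[Ew gw] /= gyw]] := cly _ (g_lsc y Ey _ (ltac:(lra) : 0 < g y - c)).
by have := gyw Ew; lra.
Qed.

End Closedness.

Lemma halfspace_closed (R : realType) (V : normedModType R) (ip : V -> V -> R)
    (z d : V) (c : R) :
  is_inner_product ip -> closed [set y | ip (y - z) d <= c].
Proof.
move=> ipP; apply: (@closed_le_lipschitz _ _ _ `|d|) => // x y.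
have -> : ip (x - z) d = ip (y - z) d + ip (x - y) d by ip_expand ipP; ring.
by rewrite lerD2l mulrC (cauchy_schwarz ipP).
Qed.

Lemma convex_subset_comb (R : realType) (V : normedModType R) (E : set V)
    (x y : V) (t : R) :
  convex_subset E -> E x -> E y -> 0 <= t <= 1 -> E ((1 - t) *: x + t *: y).
Proof.
by move=> E_convex Ex Ey t01; rewrite addrC; apply: E_convex.
Qed.

Lemma near_inftyP (P : nat -> Prop) :
  (\forall n \near \oo, P n) <-> exists N, forall n, (N <= n)%N -> P n.
Proof. by split => [[N _ hN]|[N hN]]; exists N. Qed.

Lemma natSinv_lt_tail (R : realType) (d : R) : 0 < d ->
  exists N, forall n, (N <= n)%N -> n.+1%:R^-1 < d.
Proof. by move=> d0; apply/near_inftyP; exact: (near_infty_natSinv_lt (PosNum d0)). Qed.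

Lemma limn_einf_gt0_lbound (R : realType) (s : R ^nat) :
  (0 < limn_einf (fun n => (s n)%:E))%E ->
  exists2 c, 0 < c & \forall n \near \oo, c <= s n.
Proof.
rewrite limn_einf_lim (cvg_lim _ (@cvg_einfs_sup R (fun n => (s n)%:E))) //.
move=> /ereal_sup_gt[_ [N _ <-]] inf_gt0.
have inf_le n : (N <= n)%N -> (einfs (fun n => (s n)%:E) N <= (s n)%:E)%E.
  by move=> Nn; apply: ereal_inf_lbound; exists n.
move: inf_gt0 inf_le; case: (einfs _ N) => [c| |] // c0 inf_le.
- by exists c; [rewrite -lte_fin | apply/near_inftyP; exists N => n /inf_le].
- by exists 1 => //; apply/near_inftyP; exists N => n /inf_le.
Qed.

Lemma nonincreasing_gap_lt (R : realType) (D : R ^nat) :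
  (forall n, 0 <= D n) -> (forall n, D n.+1 <= D n) -> forall e, 0 < e ->
  \forall n \near \oo, forall m, (n <= m)%N -> D n - D m < e.
Proof.
move=> D_ge0 /nonincreasing_seqP D_noninc e e0.
have D_cvg : cvgn D.
  by apply: nonincreasing_is_cvgn => //; exists 0 => _ [n _ <-].
move/cvgrPdist_lt : (D_cvg) => /(_ e e0); apply: filterS => n + m nm.
rewrite ltr_norml => /andP[+ _].
have := nonincreasing_cvgn_ge D_noninc D_cvg m; lra.
Qed.

Lemma cauchy_tail_cvg (R : realType) (V : completeNormedModType R) (s : nat -> V) :
  (forall e, 0 < e -> exists N, forall n, (N <= n)%N -> `|s N - s n| < e) ->
  exists l : V, s @ \oo --> l.
Proof.
move=> s_cauchy; exists (lim (s @ \oo)); apply: cauchy_cvg; apply: cauchy_exP => e e0.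
have [N hN] := s_cauchy e e0.
by exists (s N), N => // n /= Nn; rewrite -ball_normE /=; apply: hN.
Qed.

Section Projection.
Variables (R : realType) (V : completeNormedModType R) (ip : V -> V -> R).
Hypothesis ipP : is_inner_product ip.

Lemma nearest_point_exists (K : set V) (z : V) : closed K -> convex_subset K ->
  (exists k, K k) -> exists p, K p /\ forall k, K k -> `|z - p| <= `|z - k|.
Proof.
move=> K_closed K_convex [k0 Kk0].
set D := [set `|z - k| ^+ 2 | k in K].
have D_inf : has_inf D.
  by split; [exists (`|z - k0| ^+ 2), k0 | exists 0 => _ [k _ <-]; exact: sqr_ge0].
have d_le k : K k -> inf D <= `|z - k| ^+ 2 by move=> Kk; apply: (ge_inf D_inf.2); exists k.
have /choice[ks ks_min] : forall n : nat, exists k,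
    K k /\ `|z - k| ^+ 2 < inf D + n.+1%:R^-1.
  move=> n; have n_gt0 : 0 < n.+1%:R^-1 :> R by rewrite invr_gt0 ltr0Sn.
  by have [_ [k Kk <-] lt] := inf_adherent n_gt0 D_inf; exists k.
have [p ks_p] : exists p : V, ks @ \oo --> p.
  apply: cauchy_tail_cvg => e e0.
  have e4 : 0 < e * e / 4 by rewrite divr_gt0 ?mulr_gt0.
  have [N hN] := natSinv_lt_tail e4.
  exists N => n Nn; rewrite -ltr_sqr ?nnegrE ?(ltW e0) // [e ^+ 2]expr2.
  have mid_le : inf D <= `|z - ((1 / 2) *: ks N + (1 - 1 / 2) *: ks n)| ^+ 2.
    by apply/d_le/K_convex; [exact: (ks_min N).1 | exact: (ks_min n).1 | apply/andP; split; lra].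
  have par : `|ks N - ks n| ^+ 2 = 2 * `|z - ks N| ^+ 2 + 2 * `|z - ks n| ^+ 2
    - 4 * `|z - ((1 / 2) *: ks N + (1 - 1 / 2) *: ks n)| ^+ 2 := parallelogram_midpoint ipP z _ _.
  have := (ks_min N).2; have := (ks_min n).2; have := hN N (leqnn N); have := hN n Nn.
  have : 4 * (e * e / 4) = e * e by rewrite mulrC divfK.
  move: (N.+1%:R^-1) (n.+1%:R^-1) => iN in_; lra.
exists p; split.
  by apply: (closed_cvg _ K_closed _ _ ks_p); apply: nearW => n; exact: (ks_min n).1.
move=> k Kk; apply/ler_addgt0Pr => e e0.
have e2 : 0 < e / 2 by rewrite divr_gt0.
have [n [/= p_near n_small]] := filter_ex (filterI
  ((cvgrPdist_lt _ _).1 ks_p _ e2) (near_infty_natSinv_lt (PosNum (exprn_gt0 2 e2)))).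
have zk_lt : `|z - ks n| < `|z - k| + e / 2.
  rewrite -ltr_sqr ?nnegrE ?addr_ge0 ?(ltW e2) // sqrrD.
  have := mulr_ge0 (normr_ge0 (z - k)) (ltW e2).
  have := (ks_min n).2; have := d_le _ Kk; move: n_small.
  move: (n.+1%:R^-1) => i; lra.
have : `|z - p| <= `|z - ks n| + `|p - ks n|.
  have -> : z - p = (z - ks n) - (p - ks n) by rewrite opprB addrA subrK.
  exact: ler_normB.
lra.
Qed.

Lemma metric_projP (K : set V) (z : V) : closed K -> convex_subset K ->
  (exists k, K k) ->
  K (metric_proj K z) /\ forall k, K k -> `|z - metric_proj K z| <= `|z - k|.
Proof.
move=> K_closed K_convex K0.
exact: (xgetPex 0 (nearest_point_exists z K_closed K_convex K0)).
Qed.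

Lemma nearest_point_variational (K : set V) (z p : V) : convex_subset K -> K p ->
  (forall k, K k -> `|z - p| <= `|z - k|) ->
  forall c, K c -> ip (z - p) (c - p) <= 0.
Proof.
move=> K_convex Kp p_min c Kc; rewrite leNgt; apply/negP => g0.
set g := ip (z - p) (c - p) in g0.
set M := `|c - p| ^+ 2.
have M0 : 0 <= M by exact: sqr_ge0.
(* move from p towards c by a step t small enough that t M < g *)
set t := g / (M + g).
have t0 : 0 < t by rewrite /t divr_gt0 //; lra.
have t1 : t <= 1 by rewrite /t ler_pdivrMr ?mul1r; lra.
have tM : t * M < g.
  by rewrite /t mulrAC ltr_pdivrMr ?mulrDr ?ltrDl ?mulr_gt0 //; lra.
have t01 : 0 <= t <= 1 by apply/andP; split; lra.
have : `|z - p| ^+ 2 <= `|(z - p) - t *: (c - p)| ^+ 2.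
  have -> : z - p - t *: (c - p) = z - ((1 - t) *: p + t *: c).
    by rewrite -addrA -opprD scalerBl scale1r scalerBr -addrA [- _ + _]addrC.
  by rewrite ler_sqr ?nnegrE //; apply: p_min; exact: convex_subset_comb K_convex Kp Kc t01.
rewrite (sqr_normB ipP (z - p)) (ipZr ipP) normrZ exprMn (ger0_norm (ltW t0)) -/g -/M.
have : t * (t * M) < t * g by rewrite ltr_pM2l.
have := mulr_gt0 t0 g0.
lra.
Qed.

End Projection.

Section NestedSets.
Variables (R : realType) (V : completeNormedModType R) (ip : V -> V -> R).
Hypothesis ipP : is_inner_product ip.

(* The minimal-norm points of a nested sequence of closed convex sets have nondecreasing
   norms, and the parallelogram law makes them a Cauchy sequence. *)
Lemma nested_closed_convex_meet (K : nat -> set V) (M : R) :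
  (forall m, closed (K m)) -> (forall m, convex_subset (K m)) ->
  (forall m m', (m <= m')%N -> K m' `<=` K m) ->
  (forall m, exists2 y, K m y & `|y| <= M) ->
  exists z, forall m, K m z.
Proof.
move=> K_closed K_convex K_nested K_bounded.
have K0 m : exists y, K m y by have [y Ky _] := K_bounded m; exists y.
pose p m := metric_proj (K m) 0.
have pP m := metric_projP ipP 0 (K_closed m) (K_convex m) (K0 m).
have p_min m k : K m k -> `|p m| <= `|k|.
  by move=> Kk; have := (pP m).2 _ Kk; rewrite !sub0r !normrN.
have pK m m' : (m <= m')%N -> K m (p m') by move=> mm'; exact: K_nested _ _ mm' _ (pP m').1.
pose D m := M ^+ 2 - `|p m| ^+ 2.
have D_ge0 m : 0 <= D m.
  have [y Ky yM] := K_bounded m; rewrite subr_ge0 ler_sqr ?nnegrE //.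
    exact: le_trans (p_min _ _ Ky) yM.
  exact: le_trans (normr_ge0 y) yM.
have D_step m : D m.+1 <= D m.
  by rewrite lerD2l lerN2 ler_sqr ?nnegrE //; apply: p_min; exact: pK.
have p_dist m m' : (m <= m')%N -> `|p m - p m'| ^+ 2 <= 2 * (D m - D m').
  move=> mm'; rewrite (parallelogram_midpoint ipP 0) !sub0r !normrN.
  apply: (@le_trans _ _ (2 * `|p m| ^+ 2 + 2 * `|p m'| ^+ 2 - 4 * `|p m| ^+ 2)); last by rewrite /D; lra.
  rewrite lerD2l lerN2 ler_wpM2l // ler_sqr ?nnegrE //; apply: p_min.
  by apply: K_convex; [exact: (pP m).1 | exact: pK | apply/andP; split; lra].
have [z p_z] : exists z : V, p @ \oo --> z.
  apply: cauchy_tail_cvg => e e0.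
  have e2 : 0 < e * e / 2 by rewrite divr_gt0 ?mulr_gt0.
  have [N /(_ N (leqnn N)) hN] := (near_inftyP _).1 (nonincreasing_gap_lt D_ge0 D_step e2).
  exists N => n Nn; rewrite -ltr_sqr ?nnegrE ?(ltW e0) //.
  rewrite [X in _ < X]expr2; have := p_dist _ _ Nn; have := hN _ Nn; lra.
exists z => m; apply: (closed_cvg _ (K_closed m) _ _ p_z).
by apply: filterS (nbhs_infty_ge m) => n; exact: pK.
Qed.

End NestedSets.

(* [z] behaves like a weak cluster point of [s] along the indices satisfying [Q]:
   a closed convex set is weakly closed, so it contains [z] as soon as it eventually
   contains every [s n] with [Q n]. *)
Definition convex_cluster (R : realType) (V : normedModType R) (s : nat -> V)
    (Q : set nat) (z : V) :=
  forall D : set V, closed D -> convex_subset D ->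
    (\forall n \near \oo, Q n -> D (s n)) -> D z.

Lemma convex_cluster_exists (R : realType) (V : completeNormedModType R)
    (ip : V -> V -> R) (s : nat -> V) (Q : set nat) (M : R) :
  is_inner_product ip -> (forall n, `|s n| <= M) ->
  (forall m, exists2 n, (m <= n)%N & Q n) -> exists z, convex_cluster s Q z.
Proof.
move=> ipP s_bounded Q_inf.
pose K m := [set y | forall D : set V, closed D -> convex_subset D ->
  (forall n, (m <= n)%N -> Q n -> D (s n)) -> D y].
have sK m n : (m <= n)%N -> Q n -> K m (s n) by move=> mn Qn D _ _; apply.
have [z Kz] : exists z, forall m, K m z.
  apply: (@nested_closed_convex_meet _ _ _ ipP K M).
  - move=> m y cly D D_closed D_convex sD; apply: (D_closed).
    by apply: (closureS _ cly) => w; apply.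
  - move=> m y1 y2 t Ky1 Ky2 t01 D D_closed D_convex sD.
    exact: D_convex (Ky1 D D_closed D_convex sD) (Ky2 D D_closed D_convex sD) t01.
  - move=> m m' mm' y Ky D D_closed D_convex sD; apply: Ky => // n m'n.
    exact/sD/(leq_trans mm').
  - by move=> m; have [n mn Qn] := Q_inf m; exists (s n); [exact: sK | exact: s_bounded].
by exists z => D D_closed D_convex /near_inftyP[m sD]; exact: (Kz m D D_closed D_convex sD).
Qed.

Section HybridEquilibrium.
Variables (R : realType) (V : normedModType R) (E : set V) (S : V -> V) (f : V -> V -> R).
Hypotheses (E_closed : closed E) (E_convex : convex_subset E).

Section Hybrid.
Hypothesis S_hybrid : hybrid E S.

Lemma hybrid_quasi_nonexpansive (p x : V) : Fixpts E S p -> E x ->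
  `|S x - p| <= `|x - p|.
Proof.
move=> [Ep Sp] Ex; have := S_hybrid Ex Ep; rewrite Sp (distrC p x).
by move=> hyb; rewrite -ler_sqr ?nnegrE //; lra.
Qed.

Lemma closed_Fixpts : closed (Fixpts E S).
Proof.
move=> y cly.
have Ey : E y by apply: (E_closed); apply: (closureS _ cly) => w [].
split => //; apply/eqP; rewrite -subr_eq0 -normr_le0.
apply/ler_addgt0Pr => e e0; rewrite add0r.
have [w [Fw /=]] := cly _ (nbhsx_ballx y _ (ltac:(lra) : 0 < e / 2)).
rewrite -ball_normE /= => yw.
have := hybrid_quasi_nonexpansive Fw Ey.
have -> : S y - y = (S y - w) - (y - w) by rewrite opprB addrA subrK.
have := ler_normB (S y - w) (y - w); lra.
Qed.

Lemma convex_Fixpts (ip : V -> V -> R) : is_inner_product ip ->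
  convex_subset (Fixpts E S).
Proof.
move=> ipP p q t [Ep Sp] [Eq Sq] t01.
have Er := E_convex Ep Eq t01; split => //.
set r := t *: p + (1 - t) *: q in Er *.
have [t0 t1] := andP t01.
have rE : r = (1 - (1 - t)) *: p + (1 - t) *: q by rewrite subKr.
(* S r is at least as close as r to both ends of the segment [p, q] through r, so
   strict convexity of the squared norm forces S r = r. *)
have Sr_p := hybrid_quasi_nonexpansive (conj Ep Sp) Er.
have Sr_q := hybrid_quasi_nonexpansive (conj Eq Sq) Er.
have := sqr_norm_convex ipP (1 - t) p q (S r).
have := sqr_norm_convex ipP (1 - t) p q r.
rewrite -rE subrr normr0 expr0n /= => r_r Sr_r.
rewrite (distrC p (S r)) (distrC q (S r)) in Sr_r.
rewrite (distrC p r) (distrC q r) in r_r.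
have : `|S r - p| ^+ 2 <= `|r - p| ^+ 2 by rewrite ler_sqr ?nnegrE.
have : `|S r - q| ^+ 2 <= `|r - q| ^+ 2 by rewrite ler_sqr ?nnegrE.
move=> le_q le_p.
apply/eqP; rewrite -subr_eq0 -normr_le0 -(ler_sqr (normr_ge0 _)) ?nnegrE // expr0n /=.
rewrite distrC; nra.
Qed.

End Hybrid.

Section Equilibrium.
Hypotheses (fA1 : A1 E f) (fA2 : A2 E f) (fA3 : A3 E f) (fA4 : A4 E f).

Lemma EPset_monotone (p y : V) : EPset E f p -> E y -> f y p <= 0.
Proof. by move=> [Ep p_eq] Ey; have := fA2 Ey Ep; have := p_eq _ Ey; lra. Qed.

Lemma Minty_EPset (x : V) : E x -> (forall y, E y -> f y x <= 0) -> EPset E f x.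
Proof.
move=> Ex x_minty; split => // y Ey; rewrite leNgt; apply/negP => fxy_lt0.
set e := - f x y / 2.
have e0 : 0 < e by rewrite /e; lra.
have : \forall t \near 0^'+, (0 < t < 1) /\ f (t *: y + (1 - t) *: x) y <= f x y + e.
  near=> t; split; first (apply/andP; split).
  - by near: t; exact: nbhs_right_gt.
  - by near: t; apply: nbhs_right_lt; lra.
  - by near: t; exact: fA3.
case/filter_ex => t [/andP[t0 t1] ft].
set z := t *: y + (1 - t) *: x in ft.
have Ez : E z by apply: E_convex => //; apply/andP; split; lra.
(* by convexity of f z, 0 = f z z <= t f(z, y) + (1 - t) f(z, x), and both terms are negative *)
have := (fA4 Ez).1 _ _ t Ey Ex (ltac:(apply/andP; split; lra)).
rewrite -/z fA1 //.
have : t * f z y < 0 by rewrite pmulr_rlt0 //; move: ft; rewrite /e; lra.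
have : (1 - t) * f z x <= 0 by rewrite pmulr_rle0 ?subr_gt0 ?x_minty.
lra.
Unshelve. all: by end_near.
Qed.

Lemma closed_sublevel (w : V) (c : R) : E w -> closed [set t | E t /\ f w t <= c].
Proof. by move=> Ew; apply: closed_sublevel_lsc => //; exact: (fA4 Ew).2. Qed.

Lemma convex_sublevel (w : V) (c : R) : E w -> convex_subset [set t | E t /\ f w t <= c].
Proof.
move=> Ew y1 y2 t [Ey1 fy1] [Ey2 fy2] t01; split; first exact: E_convex.
apply: le_trans ((fA4 Ew).1 _ _ _ Ey1 Ey2 t01) _.
by have [t0 t1] := andP t01; nra.
Qed.

Lemma closed_EPset : closed (EPset E f).
Proof.
move=> y cly.
have Ey : E y by apply: (E_closed); apply: (closureS _ cly) => w [].
apply: Minty_EPset => // w Ew.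
have sub : EPset E f `<=` [set t | E t /\ f w t <= 0].
  by move=> t EPt; split; [exact: EPt.1 | exact: EPset_monotone].
by have [] := @closed_sublevel w 0 Ew _ (closureS sub cly).
Qed.

Lemma convex_EPset : convex_subset (EPset E f).
Proof.
move=> p q t EPp EPq t01.
apply: Minty_EPset => [|w Ew]; first exact: E_convex EPp.1 EPq.1 t01.
by have [] := @convex_sublevel w 0 Ew _ _ _ (conj EPp.1 (EPset_monotone EPp Ew))
  (conj EPq.1 (EPset_monotone EPq Ew)) t01.
Qed.

End Equilibrium.
End HybridEquilibrium.

Lemma sqr_dist_small_eq (R : realType) (V : normedModType R) (x y : V) :
  (forall e, 0 < e -> `|x - y| ^+ 2 <= e) -> x = y.
Proof.
move=> small; apply/eqP; rewrite -subr_eq0 -normr_eq0 -sqrf_eq0 eq_le sqr_ge0 andbT.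
by apply/ler_addgt0Pr => e e0; rewrite add0r; exact: small.
Qed.

Section Iteration.
Variables (R : realType) (H : completeNormedModType R) (ip : H -> H -> R).
Variables (E : set H) (f : H -> H -> R) (S : H -> H).
Variables (alpha r beta : nat -> R) (a b : R) (x0 : H) (x u : nat -> H) (p0 : H).
Hypothesis ipP : is_inner_product ip.
Hypotheses (E_closed : closed E) (E_convex : convex_subset E).
Hypotheses (fA1 : A1 E f) (fA2 : A2 E f) (fA3 : A3 E f) (fA4 : A4 E f).
Hypotheses (SE : forall z, E z -> E (S z)) (S_hybrid : hybrid E S).
Hypotheses (a_gt0 : 0 < a) (alpha_bounds : forall n, a <= alpha n <= 1).
Hypotheses (r_gt0 : forall n, 0 < r n) (r_liminf : (0 < limn_einf (fun n => (r n)%:E))%E).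
Hypotheses (b_gt0 : 0 < b) (beta_bounds : forall n, b <= beta n <= 1).
Hypothesis beta_liminf : (0 < limn_einf (fun n => (beta n * (1 - beta n))%:E))%E.
Hypotheses (x0E : E x0) (x_0 : x 0%N = x0).
Hypothesis u_resolvent : forall n, E (u n) /\
  forall y, E y -> 0 <= f (u n) y + (r n)^-1 * ip (y - u n) (u n - x n).
Hypothesis x_succ : forall n, x n.+1 = (1 - alpha n) *: x n +
  alpha n *: S ((1 - beta n) *: x n + beta n *: S (u n)).

Let C := Fixpts E S `&` EPset E f.
Hypothesis p0C : C p0.

Let yn n := (1 - beta n) *: x n + beta n *: S (u n).

Lemma alpha01 n : 0 <= alpha n <= 1.
Proof. by have /andP[an ->] := alpha_bounds n; rewrite (le_trans (ltW a_gt0) an). Qed.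

Lemma beta01 n : 0 <= beta n <= 1.
Proof. by have /andP[bn ->] := beta_bounds n; rewrite (le_trans (ltW b_gt0) bn). Qed.

Lemma iterates_in_E n : E (x n) /\ E (yn n).
Proof.
have yE m : E (x m) -> E (yn m).
  move=> xE; apply: convex_subset_comb => //; last exact: beta01.
  exact/SE/(u_resolvent m).1.
elim: n => [|n [xE yE']]; first by rewrite x_0; split => //; apply: yE; rewrite x_0.
suff xE' : E (x n.+1) by split => //; exact: yE.
by rewrite x_succ; apply: convex_subset_comb => //; [exact: SE | exact: alpha01].
Qed.

Lemma resolvent_ip_le0 n p : C p -> ip (x n - u n) (p - u n) <= 0.
Proof.
move=> [_ [pE p_eq]]; have [uE u_ineq] := u_resolvent n.
have : 0 <= (r n)^-1 * ip (p - u n) (u n - x n).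
  by have := u_ineq _ pE; have := fA2 uE pE; have := p_eq _ uE; lra.
rewrite pmulr_rge0 ?invr_gt0 // => ip_ge0.
by rewrite -oppr_ge0 -(ipNl ipP) opprB (ipC ipP).
Qed.

Lemma resolvent_dist n p : C p -> `|u n - p| ^+ 2 <= `|x n - p| ^+ 2 - `|x n - u n| ^+ 2.
Proof.
move=> Cp; have := resolvent_ip_le0 n Cp.
have : `|x n - p| ^+ 2 =
    `|x n - u n| ^+ 2 + `|u n - p| ^+ 2 - 2 * ip (x n - u n) (p - u n).
  exact (law_of_cosines ipP _ _ _).
lra.
Qed.

Lemma fejer n p : C p -> `|x n.+1 - p| ^+ 2 <= `|x n - p| ^+ 2 -
  alpha n * beta n * (`|x n - u n| ^+ 2 + (1 - beta n) * `|x n - S (u n)| ^+ 2).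
Proof.
move=> Cp; have [[pE Sp] _] := Cp; have [xE yE] := iterates_in_E n.
have /andP[a0 a1] := alpha01 n; have /andP[b0 b1] := beta01 n.
have Sy : `|S (yn n) - p| ^+ 2 <= `|yn n - p| ^+ 2.
  rewrite ler_sqr ?nnegrE //; exact (hybrid_quasi_nonexpansive S_hybrid (conj pE Sp) yE).
have Su : `|S (u n) - p| ^+ 2 <= `|u n - p| ^+ 2.
  by rewrite ler_sqr ?nnegrE //; exact (hybrid_quasi_nonexpansive S_hybrid (conj pE Sp) (u_resolvent n).1).
have x_eq : `|x n.+1 - p| ^+ 2 = (1 - alpha n) * `|x n - p| ^+ 2 +
    alpha n * `|S (yn n) - p| ^+ 2 - alpha n * (1 - alpha n) * `|x n - S (yn n)| ^+ 2.
  by rewrite x_succ; exact (sqr_norm_convex ipP _ _ _ _).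
have y_eq : `|yn n - p| ^+ 2 = (1 - beta n) * `|x n - p| ^+ 2 +
    beta n * `|S (u n) - p| ^+ 2 - beta n * (1 - beta n) * `|x n - S (u n)| ^+ 2.
  exact (sqr_norm_convex ipP _ _ _ _).
have Su_le := ler_wpM2l b0 (le_trans Su (resolvent_dist n Cp)).
have y_le : `|yn n - p| ^+ 2 <= `|x n - p| ^+ 2 -
    beta n * (`|x n - u n| ^+ 2 + (1 - beta n) * `|x n - S (u n)| ^+ 2) by lra.
have := ler_wpM2l a0 (le_trans Sy y_le).
have : 0 <= alpha n * (1 - alpha n) * `|x n - S (yn n)| ^+ 2.
  by rewrite !mulr_ge0 ?subr_ge0.
lra.
Qed.

Lemma dist_step n p : C p -> `|x n.+1 - p| <= `|x n - p|.
Proof.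
move=> Cp; rewrite -ler_sqr ?nnegrE //; apply: le_trans (fejer n Cp) _.
have /andP[a0 _] := alpha01 n; have /andP[b0 b1] := beta01 n.
rewrite lerBlDr lerDl !mulr_ge0 ?addr_ge0 ?mulr_ge0 ?subr_ge0 ?sqr_ge0 //.
Qed.

Lemma dist_noninc p m n : C p -> (m <= n)%N -> `|x n - p| <= `|x m - p|.
Proof.
by move=> Cp; apply: (nonincreasing_seqP (fun k => `|x k - p|)).1 => k; exact: dist_step.
Qed.

Let Mu := `|x0 - p0| + `|p0|.

Lemma u_bounded n : `|u n| <= Mu.
Proof.
have : `|u n - p0| <= `|x0 - p0|.
  rewrite -ler_sqr ?nnegrE //; apply: le_trans (resolvent_dist n p0C) _.
  have : `|x n - p0| ^+ 2 <= `|x0 - p0| ^+ 2.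
    by rewrite ler_sqr ?nnegrE // -x_0; exact: dist_noninc.
  have := sqr_ge0 `|x n - u n|; lra.
have : `|u n| <= `|u n - p0| + `|p0|.
  by rewrite -{1}(subrK p0 (u n)) ler_normD.
rewrite /Mu; lra.
Qed.

Lemma dist_gap_lt e : 0 < e ->
  \forall n \near \oo, `|x n - p0| ^+ 2 - `|x n.+1 - p0| ^+ 2 < e.
Proof.
move=> e0; have D_step k : `|x k.+1 - p0| ^+ 2 <= `|x k - p0| ^+ 2.
  by rewrite ler_sqr ?nnegrE //; exact: dist_step.
apply: filterS (nonincreasing_gap_lt (D := fun k => `|x k - p0| ^+ 2)
  (fun k => sqr_ge0 _) D_step e0) => n.
exact.
Qed.

Lemma x_sub_u_small e : 0 < e -> \forall n \near \oo, `|x n - u n| < e.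
Proof.
move=> e0; have abe : 0 < a * b * e ^+ 2 by rewrite !mulr_gt0 // exprn_gt0.
apply: filterS (dist_gap_lt abe) => n gap.
rewrite -ltr_sqr ?nnegrE ?(ltW e0) // -(ltr_pM2l (mulr_gt0 a_gt0 b_gt0)).
have /andP[an _] := alpha_bounds n; have /andP[bn _] := beta_bounds n.
have /andP[a0 _] := alpha01 n; have /andP[b0 b1] := beta01 n.
have ab : a * b <= alpha n * beta n by apply: ler_pM => //; apply: ltW.
have := ler_wpM2r (sqr_ge0 `|x n - u n|) ab.
have : 0 <= alpha n * beta n * ((1 - beta n) * `|x n - S (u n)| ^+ 2).
  by rewrite !mulr_ge0 ?subr_ge0.
have := fejer n p0C; lra.
Qed.

Lemma x_sub_Su_small e : 0 < e -> \forall n \near \oo, `|x n - S (u n)| < e.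
Proof.
move=> e0; have [c c0 beta_c] := limn_einf_gt0_lbound beta_liminf.
have ace : 0 < a * c * e ^+ 2 by rewrite !mulr_gt0 // exprn_gt0.
apply: filterS2 (dist_gap_lt ace) beta_c => n gap cn.
rewrite -ltr_sqr ?nnegrE ?(ltW e0) // -(ltr_pM2l (mulr_gt0 a_gt0 c0)).
have /andP[an _] := alpha_bounds n.
have /andP[a0 _] := alpha01 n; have /andP[b0 b1] := beta01 n.
have ac : a * c <= alpha n * (beta n * (1 - beta n)) by apply: ler_pM => //; apply: ltW.
have := ler_wpM2r (sqr_ge0 `|x n - S (u n)|) ac.
have : 0 <= alpha n * beta n * `|x n - u n| ^+ 2 by rewrite !mulr_ge0.
have := fejer n p0C; lra.
Qed.

Lemma u_sub_Su_small e : 0 < e -> \forall n \near \oo, `|S (u n) - u n| < e.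
Proof.
move=> e0; have e2 : 0 < e / 2 by rewrite divr_gt0.
apply: filterS2 (x_sub_u_small e2) (x_sub_Su_small e2) => n xu xSu.
have : `|S (u n) - u n| <= `|x n - S (u n)| + `|x n - u n|.
  have -> : S (u n) - u n = - (x n - S (u n)) + (x n - u n) by rewrite opprB addrA subrK.
  by rewrite -[`|x n - S (u n)|]normrN ler_normD.
lra.
Qed.

Lemma closed_C : closed C.
Proof.
exact: closedI (closed_Fixpts E_closed S_hybrid)
  (closed_EPset E_closed E_convex fA1 fA2 fA3 fA4).
Qed.

Lemma convex_C : convex_subset C.
Proof.
move=> p q t [Fp EPp] [Fq EPq] t01; split.
- exact (convex_Fixpts E_convex S_hybrid ipP Fp Fq t01).
- exact (convex_EPset E_convex fA1 fA2 fA3 fA4 EPp EPq t01).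
Qed.

Let q n := metric_proj C (x n).

Lemma qP n : C (q n) /\ forall k, C k -> `|x n - q n| <= `|x n - k|.
Proof. exact (metric_projP ipP (x n) closed_C convex_C (ex_intro _ p0 p0C)). Qed.

Lemma q_variational n k : C k -> ip (x n - q n) (k - q n) <= 0.
Proof. by move=> Ck; exact (nearest_point_variational ipP convex_C (qP n).1 (qP n).2 Ck). Qed.

Lemma proj_dist_step n : `|x n.+1 - q n.+1| <= `|x n - q n|.
Proof. exact: le_trans ((qP n.+1).2 _ (qP n).1) (dist_step n (qP n).1). Qed.

Lemma proj_dist_le n : `|x n - q n| <= `|x 0%N - q 0%N|.
Proof.
exact: (nonincreasing_seqP (fun k => `|x k - q k|)).1 proj_dist_step 0%N n (leq0n n).
Qed.

Lemma proj_dist_sqr n m : (n <= m)%N ->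
  `|q n - q m| ^+ 2 <= `|x n - q n| ^+ 2 - `|x m - q m| ^+ 2.
Proof.
move=> nm; have := q_variational m (qP n).1.
have : `|x m - q n| ^+ 2 =
    `|x m - q m| ^+ 2 + `|q n - q m| ^+ 2 - 2 * ip (x m - q m) (q n - q m).
  by rewrite (distrC (q n)); exact (law_of_cosines ipP _ _ _).
have : `|x m - q n| ^+ 2 <= `|x n - q n| ^+ 2.
  by rewrite ler_sqr ?nnegrE //; exact: dist_noninc (qP n).1 nm.
lra.
Qed.

Lemma q_cvg : exists w : H, q @ \oo --> w.
Proof.
apply: cauchy_tail_cvg => e e0.
have D_step k : `|x k.+1 - q k.+1| ^+ 2 <= `|x k - q k| ^+ 2.
  by rewrite ler_sqr ?nnegrE //; exact: proj_dist_step.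
have [N /(_ N (leqnn N)) hN] := (near_inftyP _).1 (nonincreasing_gap_lt
  (D := fun k => `|x k - q k| ^+ 2) (fun k => sqr_ge0 _) D_step (exprn_gt0 2 e0)).
exists N => n Nn; rewrite -ltr_sqr ?nnegrE ?(ltW e0) //.
exact: le_lt_trans (proj_dist_sqr Nn) (hN _ Nn).
Qed.

Section ClusterPoint.
Variables (Q : set nat) (z : H).
Hypothesis z_cluster : convex_cluster u Q z.

Lemma cluster_in_E : E z.
Proof. by apply: z_cluster => //; apply: nearW => n _; exact: (u_resolvent n).1. Qed.

Lemma cluster_fixed : S z = z.
Proof.
have zE := cluster_in_E.
apply: esym; apply: sqr_dist_small_eq => eps eps0.
set d := z - S z.
set K := 4 * Mu + `|z| + 3 * `|S z|.
have K0 : 0 <= K by rewrite /K /Mu !addr_ge0 ?mulr_ge0.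
have eK : 0 < eps / (K + 1) by rewrite divr_gt0 //; lra.
have : [set y | ip (y - z) d <= (eps - `|d| ^+ 2) / 2] z.
  apply: z_cluster; [exact: halfspace_closed ipP | exact (@halfspace_convex _ _ _ ipP _ _ _) |].
  apply: filterS (u_sub_Su_small eK) => n Su_u _ /=.
  have uE := (u_resolvent n).1.
  have : 2 * ip (u n - z) d + `|d| ^+ 2 <=
      `|S (u n) - u n| * (`|u n - z| + 3 * `|u n - S z|).
    exact (hybrid_ip_bound ipP (S_hybrid uE zE)).
  have : `|u n - z| + 3 * `|u n - S z| <= K.
    have := ler_normB (u n) z; have := ler_normB (u n) (S z); have := u_bounded n.
    rewrite /K; lra.
  move=> /(ler_wpM2l (normr_ge0 (S (u n) - u n))).
  move: Su_u; rewrite ltr_pdivlMr; last lra.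
  have := normr_ge0 (S (u n) - u n); lra.
by rewrite /= subrr (ip0l ipP); lra.
Qed.

Lemma cluster_EP : EPset E f z.
Proof.
have zE := cluster_in_E.
apply: Minty_EPset E_convex fA1 fA3 fA4 _ zE _ => y yE.
apply/ler_addgt0Pr => eps eps0; rewrite add0r.
have [rho rho0 r_ge] := limn_einf_gt0_lbound r_liminf.
set B := `|y| + Mu.
have B0 : 0 <= B by rewrite /B /Mu !addr_ge0.
have eB : 0 < eps * rho / (B + 1) by rewrite !divr_gt0 ?mulr_gt0 //; lra.
have : [set t | E t /\ f y t <= eps] z.
  apply: z_cluster; [exact: closed_sublevel E_closed fA4 _ _ yE |
    exact: convex_sublevel E_convex fA4 _ _ yE |].
  apply: filterS2 r_ge (x_sub_u_small eB) => n rho_r xu _ /=.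
  have [uE u_ineq] := u_resolvent n; split => //.
  have r_inv : (r n)^-1 * (eps * rho) <= eps.
    by rewrite mulrCA ger_pMr // mulrC ler_pdivrMr ?mul1r.
  have cs : ip (y - u n) (u n - x n) <= `|y - u n| * `|x n - u n|.
    by rewrite (distrC (x n)); exact (cauchy_schwarz ipP _ _).
  have yu : `|y - u n| <= B by have := ler_normB y (u n); have := u_bounded n; rewrite /B; lra.
  have xu' : `|x n - u n| * (B + 1) < eps * rho by rewrite -ltr_pdivlMr //; lra.
  have : ip (y - u n) (u n - x n) <= eps * rho.
    apply: le_trans cs _; apply: le_trans (ler_wpM2r (normr_ge0 _) yu) _.
    have := normr_ge0 (x n - u n); lra.
  have ri_ge0 : 0 <= (r n)^-1 by rewrite invr_ge0 ltW.
  move=> /(ler_wpM2l ri_ge0).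
  have := u_ineq _ yE; have := fA2 uE yE; lra.
by case.
Qed.

Variable w : H.
Hypothesis q_w : q @ \oo --> w.

Lemma cluster_eq_lim : z = w.
Proof.
have Cz : C z.
  by split; [split; [exact: cluster_in_E | exact: cluster_fixed] | exact: cluster_EP].
apply: sqr_dist_small_eq => eps eps0.
set Z := `|z - w|.
set G := `|x 0%N - q 0%N|.
have Z0 : 0 <= Z by exact: normr_ge0.
have G0 : 0 <= G by exact: normr_ge0.
have e1 : 0 < eps / 3 / (Z + 1) by rewrite !divr_gt0 //; lra.
have e2 : 0 < eps / 3 / (G + Z + 1) by rewrite !divr_gt0 //; lra.
have : [set y | ip (y - w) (z - w) <= eps] z.
  apply: z_cluster; [exact: halfspace_closed ipP | exact (@halfspace_convex _ _ _ ipP _ _ _) |].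
  apply: filterS2 ((cvgrPdist_lt _ _).1 q_w _ e2) (x_sub_u_small e1) => n qw xu _ /=.
  have : ip (u n - w) (z - w) = ip (u n - x n) (z - w) + ip (x n - q n) (z - q n)
      + ip (x n - q n) (q n - w) + ip (q n - w) (z - w) by ip_expand ipP; ring.
  have : ip (u n - x n) (z - w) <= `|x n - u n| * Z.
    by rewrite (distrC (x n)); exact (cauchy_schwarz ipP _ _).
  have := q_variational n Cz.
  have : ip (x n - q n) (q n - w) <= G * `|w - q n|.
    apply: le_trans (ler_wpM2r (normr_ge0 _) (proj_dist_le n)).
    by rewrite (distrC w); exact (cauchy_schwarz ipP _ _).
  have : ip (q n - w) (z - w) <= `|w - q n| * Z.
    by rewrite (distrC w); exact (cauchy_schwarz ipP _ _).
  have : `|w - q n| * (G + Z + 1) < eps / 3 by rewrite -ltr_pdivlMr //; lra.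
  have : `|x n - u n| * (Z + 1) < eps / 3 by rewrite -ltr_pdivlMr //; lra.
  have := normr_ge0 (x n - u n); have := normr_ge0 (w - q n); lra.
by rewrite /= (ipxx ipP).
Qed.

End ClusterPoint.

Lemma ip_sub_lim_lt w h c : q @ \oo --> w -> 0 < c ->
  \forall n \near \oo, ip (x n - w) h < c.
Proof.
move=> q_w c0; apply: contrapT => not_ev.
have Q_inf m : exists2 n, (m <= n)%N & c <= ip (x n - w) h.
  apply: contrapT => no_n; apply: not_ev; apply: filterS (nbhs_infty_ge m) => n mn.
  by rewrite ltNge; apply/negP => cn; apply: no_n; exists n.
have [z z_cluster] := convex_cluster_exists ipP u_bounded Q_inf.
have ch : 0 < c / 2 / (`|h| + 1) by rewrite !divr_gt0 //; have := normr_ge0 h; lra.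
have : [set y | ip (y - w) (- h) <= - (c / 2)] z.
  apply: z_cluster; [exact: halfspace_closed ipP | exact (@halfspace_convex _ _ _ ipP _ _ _) |].
  apply: filterS (x_sub_u_small ch) => n xu cn /=.
  have -> : ip (u n - w) (- h) = - ip (x n - w) h + ip (x n - u n) h.
    by ip_expand ipP; ring.
  have : ip (x n - u n) h <= `|x n - u n| * `|h| by exact (cauchy_schwarz ipP _ _).
  have : `|x n - u n| * (`|h| + 1) < c / 2 by rewrite -ltr_pdivlMr //; lra.
  have := normr_ge0 (x n - u n); lra.
by rewrite /= -(cluster_eq_lim z_cluster q_w) subrr (ip0l ipP); lra.
Qed.

Lemma iteration_cvg :
  exists v, Fixpts E S v /\ EPset E f v /\ weak_cvg ip x v /\ q @ \oo --> v.
Proof.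
have [w q_w] := q_cvg.
have [Fw EPw] : C w.
  by apply: (closed_cvg _ closed_C _ _ q_w); apply: nearW => n; exact: (qP n).1.
exists w; do 3!split => //.
move=> h; apply/cvgrPdist_lt => e e0.
apply: filterS2 (ip_sub_lim_lt h q_w e0) (ip_sub_lim_lt (- h) q_w e0) => n.
rewrite (ipNr ipP) !(ipBl ipP) ltr_norml => lt1 lt2; apply/andP; split; lra.
Qed.

End Iteration.

Unset Implicit Arguments.

Theorem theorem3p4 (R : realType) (H : completeNormedModType R)
  (ip : H -> H -> R) (E : set H) (f : H -> H -> R) (S : H -> H)
  (alpha r beta : nat -> R) (a b : R) (x0 : H) (x u : nat -> H) :
  is_inner_product ip ->
  (exists z, E z) -> closed E -> convex_subset E ->
  A1 E f -> A2 E f -> A3 E f -> A4 E f ->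
  (forall z, E z -> E (S z)) -> hybrid E S ->
  (exists z, Fixpts E S z /\ EPset E f z) ->
  0 < a -> (forall n, a <= alpha n <= 1) ->
  (forall n, 0 < r n) -> (0 < limn_einf (fun n => (r n)%:E))%E ->
  0 < b < 1 -> (forall n, b <= beta n <= 1) ->
  (0 < limn_einf (fun n => (beta n * (1 - beta n))%:E))%E ->
  E x0 -> x 0%N = x0 ->
  (forall n, E (u n) /\
     forall y, E y -> 0 <= f (u n) y + (r n)^-1 * ip (y - u n) (u n - x n)) ->
  (forall n, x n.+1 = (1 - alpha n) *: x n +
     alpha n *: S ((1 - beta n) *: x n + beta n *: S (u n))) ->
  exists v, Fixpts E S v /\ EPset E f v /\ weak_cvg ip x v /\
    (fun n => metric_proj (Fixpts E S `&` EPset E f) (x n)) @ \oo --> v.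
Proof.
move=> ipP _ E_closed E_convex fA1 fA2 fA3 fA4 SE S_hybrid [p0 p0C] a_gt0 alpha_bounds
  r_gt0 r_liminf /andP[b_gt0 _] beta_bounds beta_liminf x0E x_0 u_resolvent x_succ.
exact (iteration_cvg ipP E_closed E_convex fA1 fA2 fA3 fA4 SE S_hybrid a_gt0
  alpha_bounds r_gt0 r_liminf b_gt0 beta_bounds beta_liminf x0E x_0 u_resolvent x_succ p0C).
Qed.
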